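(* In a finite ELP, let $\pi$ be a policy, let $Q_{\max}$ be an optimal solution of the problem: maximize $\mathbb E_\pi[Q(S_T,A_T)]$ over $Q\in\mathcal Q$ subject to $Q\le\mathcal BQ$ pointwise, and let $\mu$ be a $Q_{\max}$-greedy policy. Let $(s,a)\in\mathcal S\times\mathcal A$ and define $N(s,a)=\{(s',a'):s'\notin\mathcal S_\bot,\ P(s'|s,a)\mu(a'|s')>0\}$. If $Q_{\max}(s,a)=Q^*(s,a)$, then for every $(s',a')\in N(s,a)$: $Q_{\max}(s',a')=Q^*(s',a')$ and $\max_{\bar a}Q_{\max}(s',\bar a)=\max_{\bar a}Q^*(s',\bar a)$.
   Context: A finite ELP is $(\mathcal S,\mathcal A,P,R,\rho)$ with finite $\mathcal S,\mathcal A$, reward $R:\mathcal S\to\mathbb R$, transitions $P(s'|s,a)$, distribution $\rho$, and nonempty terminal set $\mathcal S_\bot$. Under a policy $\pi$, $S_0$ is a fixed terminal state, $A_t\sim\pi(\cdot|S_t)$, $S_{t+1}\sim P(\cdot|S_t,A_t)$, and $T=\inf\{t\ge1:S_t\in\mathcal S_\bot\}$. ELP conditions: $\mathbb E_\pi[T]<\infty$ for every $\pi$; $P(s'|s,a)=\rho(s')$ for all $s\in\mathcal S_\bot$, all $a,s'$; every state is reachable under some policy. $\mathcal Q$ = all functions $\mathcal S\times\mathcal A\to\mathbb R$. $\mathcal BQ(s,a)=\sum_{s'}P(s'|s,a)\big(R(s')+\mathbf 1[s'\notin\mathcal S_\bot]\max_{a'}Q(s',a')\big)$, with unique fixed point $Q^*$.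 A $Q$-greedy policy is one with $\mu(a|s)>0$ only if $Q(s,a)=\max_{\bar a}Q(s,\bar a)$. *)

From HB Require Import structures.
From mathcomp Require Import all_boot all_order all_algebra.
From mathcomp Require Import all_classical all_reals all_analysis.
Set Implicit Arguments. Unset Strict Implicit. Unset Printing Implicit Defensive.
Import Order.TTheory GRing.Theory Num.Theory numFieldNormedType.Exports.
Local Open Scope ring_scope.

Section ELPDefs.
Variables (R : realType) (S A : finType).

Record elp := ELP {
  P : S -> A -> S -> R;        (* P s a s' = P(s'|s,a) *)
  rew : S -> R;
  rho : S -> R;                (* restart distribution *)
  Sbot : {set S};              (* terminal states *)
  s0 : S                       (* fixed terminal initial state S_0 *)
}.

Variable M : elp.

(* Stochastic policies: pi s a = pi(a|s). *)
Definition is_policy (pi : S -> A -> R) : Prop :=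
  (forall s a, 0 <= pi s a) /\ (forall s, \sum_(a : A) pi s a = 1).

(* alive pi n s = Pr_pi(S_{n+1} = s, T >= n+1)   (time t = n+1 >= 1). *)
Fixpoint alive (pi : S -> A -> R) (n : nat) (s' : S) : R :=
  match n with
  | 0 => \sum_(a : A) pi (s0 M) a * P M (s0 M) a s'
  | n.+1 => \sum_(s : S | s \notin Sbot M)
              alive pi n s * \sum_(a : A) pi s a * P M s a s'
  end.

(* occ pi t s = Pr_pi(S_t = s) for the (non-stopped) process. *)
Fixpoint occ (pi : S -> A -> R) (t : nat) (s' : S) : R :=
  match t with
  | 0 => (s' == s0 M)%:R
  | t.+1 => \sum_(s : S) occ pi t s * \sum_(a : A) pi s a * P M s a s'
  end.

(* E_pi[T] = sum_{t>=1} Pr(T >= t); E_pi[T] < oo iff this series converges. *)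
Definition ET_finite (pi : S -> A -> R) : Prop :=
  cvgn (series (fun n => \sum_(s : S) alive pi n s)).

Definition is_ELP : Prop :=
  [/\ (forall s a, (forall s', 0 <= P M s a s') /\ \sum_(s' : S) P M s a s' = 1),
      ((forall s, 0 <= rho M s) /\ \sum_(s : S) rho M s = 1),
      (Sbot M != finset.set0 /\ s0 M \in Sbot M),
      (forall pi, is_policy pi -> ET_finite pi) &
      ((forall s a s', s \in Sbot M -> P M s a s' = rho M s') /\
       (forall s, exists pi, is_policy pi /\ exists t, 0 < occ pi t s))].

(* max_a Q(s,a) (A is nonempty in any ELP since policies exist). *)
Definition Vmax (Q : S -> A -> R) (s : S) : R :=
  match [pick a : A] with
  | Some a0 => \big[Num.max/Q s a0]_(a : A) Q s a
  | None => 0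
  end.

Definition bellman (Q : S -> A -> R) (s : S) (a : A) : R :=
  \sum_(s' : S) P M s a s' *
     (rew M s' + (s' \notin Sbot M)%:R * Vmax Q s').

(* E_pi[Q(S_T, A_T)] = sum_{t>=1} sum_{s in Sbot} Pr(T=t, S_t=s) sum_a pi(a|s) Q(s,a). *)
Definition ExpQT (pi : S -> A -> R) (Q : S -> A -> R) : R :=
  limn (series (fun n => \sum_(s in Sbot M) alive pi n s *
                           \sum_(a : A) pi s a * Q s a)).

Definition feasible (Q : S -> A -> R) : Prop :=
  forall s a, Q s a <= bellman Q s a.

Definition LP_optimal (pi : S -> A -> R) (Q : S -> A -> R) : Prop :=
  feasible Q /\ forall Q', feasible Q' -> ExpQT pi Q' <= ExpQT pi Q.

Definition greedy (Q : S -> A -> R) (mu : S -> A -> R) : Prop :=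
  is_policy mu /\ forall s a, 0 < mu s a -> Q s a = Vmax Q s.

Definition Nset (mu : S -> A -> R) (s : S) (a : A) (s' : S) (a' : A) : Prop :=
  s' \notin Sbot M /\ 0 < P M s a s' * mu s' a'.

End ELPDefs.

From HB Require Import structures.
From mathcomp Require Import all_boot all_order all_algebra.
From mathcomp Require Import all_classical all_reals all_analysis.
From mathcomp Require Import ring.
Set Implicit Arguments.
Unset Strict Implicit.
Unset Printing Implicit Defensive.

Import Order.TTheory GRing.Theory Num.Theory numFieldNormedType.Exports.
Local Open Scope ring_scope.

(* Every feasible [Q] lies below [Q*]. Let [g] be greedy for [Q] and
   [d s = Q(s, g s) - Q*(s, g s)]; then [Q - Q* <= P (1_{not terminal} d)].
   If [d] had a positive maximum, the nonterminal states attaining it would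
   form a class that [g] never leaves; following [g] there, and elsewhere a
   policy that reaches the class, gives a policy with [E[T] = +oo].
   Hence [Qmax <= Q*] and [max Qmax <= max Q*] statewise, so
   [Q*(s,a) = Qmax(s,a) <= B Qmax (s,a) <= B Q* (s,a) = Q*(s,a)] forces
   [max Qmax (s') = max Q* (s')] at every nonterminal successor [s'];
   greediness of [mu] then gives
   [Qmax(s',a') = max Qmax (s') = max Q* (s') >= Q*(s',a') >= Qmax(s',a')]. *)

Section FiniteSums.
Variables (R : numDomainType) (T : finType).

Lemma psumr_gt0P (P : pred T) (F : T -> R) :
  (forall i, P i -> 0 <= F i) ->
  reflect (exists2 i, P i & 0 < F i) (0 < \sum_(i | P i) F i).
Proof.
move=> F_ge0; rewrite lt_def psumr_neq0 // sumr_ge0 // andbT.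
apply: (iffP hasP) => [[i _ /andP[Pi Fi]]|[i Pi Fi]]; first by exists i.
by exists i; rewrite ?mem_index_enum ?Pi.
Qed.

Lemma ler_psum_sub (P Q : pred T) (F : T -> R) :
  (forall i, P i -> Q i) -> (forall i, Q i -> 0 <= F i) ->
  \sum_(i | P i) F i <= \sum_(i | Q i) F i.
Proof.
move=> PQ F_ge0; rewrite [leLHS]big_mkcond [leRHS]big_mkcond /=.
apply: ler_sum => i _; case: ifP => [/PQ ->//|_].
by case: ifP => // /F_ge0.
Qed.

Lemma convex_ge_bound_eq (p f : T -> R) (m : R) :
  (forall i, 0 <= p i) -> \sum_i p i = 1 -> (forall i, f i <= m) ->
  m <= \sum_i p i * f i -> forall i, 0 < p i -> f i = m.
Proof.
move=> p_ge0 p_sum1 f_le m_le i p_gt0.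
have slack_ge0 j : 0 <= p j * (m - f j) by rewrite mulr_ge0 ?subr_ge0.
have slack0 : \sum_j p j * (m - f j) = 0.
  apply/eqP; rewrite eq_le sumr_ge0 // andbT.
  under eq_bigr do rewrite mulrBr.
  by rewrite sumrB -mulr_suml p_sum1 mul1r subr_le0.
have /eqP := psumr_eq0P (fun j _ => slack_ge0 j) slack0 (i := i) isT.
by rewrite mulf_eq0 (gt_eqF p_gt0) subr_eq0 => /eqP.
Qed.

End FiniteSums.

Lemma series_ncvg_eventually_ge (R : realType) (u : R ^nat) (e : R) (N : nat) :
  0 < e -> (forall n, (N <= n)%N -> e <= u n) -> ~ cvgn (series u).
Proof.
move=> e_gt0 u_ge /cvg_series_cvg_0/cvgr_lt/(_ e e_gt0) [n0 _ u_lt].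
by have := u_lt _ (leq_maxr N n0); rewrite ltNge u_ge ?leq_maxl.
Qed.

Section Vmax.
Variables (R : realType) (S A : finType).
Implicit Types (Q : S -> A -> R) (s : S) (a : A).

Lemma Vmax_ge Q s a : Q s a <= Vmax Q s.
Proof. by rewrite /Vmax; case: pickP => [a0 _|/(_ a)//]; exact: le_bigmax. Qed.

Lemma Vmax_argmax Q s a0 : Vmax Q s = Q s [arg max_(a > a0) Q s a]%O.
Proof.
case: arg_maxP => // a _ a_max; apply/eqP; rewrite eq_le Vmax_ge andbT.
rewrite /Vmax; case: pickP => [b _|/(_ a0)//].
by apply/bigmax_leP; split=> [|c _]; exact: a_max.
Qed.

Lemma le_Vmax Q Q' : (forall s a, Q s a <= Q' s a) ->
  forall s, Vmax Q s <= Vmax Q' s.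
Proof.
move=> le_QQ' s; rewrite /Vmax; case: pickP => [a0 _|//].
by apply/bigmax_leP; split=> [|a _]; apply: le_trans (le_QQ' _ _) _;
  exact: le_bigmax.
Qed.

Definition switch_policy (C : {set S}) (g : S -> A) (pi : S -> A -> R) :
    S -> A -> R :=
  fun s a => if s \in C then (a == g s)%:R else pi s a.

Lemma switch_policyP C g pi : is_policy pi -> is_policy (switch_policy C g pi).
Proof.
case=> pi_ge0 pi_sum1; rewrite /switch_policy.
split=> [s a|s]; case: (s \in C) => //.
by rewrite (bigD1 (g s)) //= eqxx big1 ?addr0 // => a /negbTE ->.
Qed.

End Vmax.

Section Dynamics.
Variables (R : realType) (S A : finType) (M : elp R S A).
Hypothesis P_ge0 : forall s a s', 0 <= P M s a s'.
Hypothesis P_sum1 : forall s a, \sum_s' P M s a s' = 1.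
Implicit Types (pi mu : S -> A -> R) (Q : S -> A -> R).

Lemma bellmanB Q Q' s a : bellman M Q s a - bellman M Q' s a =
  \sum_s' P M s a s' * ((s' \notin Sbot M)%:R * (Vmax Q s' - Vmax Q' s')).
Proof. by rewrite /bellman -sumrB; apply: eq_bigr => s' _; ring. Qed.

Lemma Vmax_eq_of_bellman_ge Q Q' s a s' :
  (forall x, Vmax Q x <= Vmax Q' x) -> bellman M Q' s a <= bellman M Q s a ->
  s' \notin Sbot M -> 0 < P M s a s' -> Vmax Q s' = Vmax Q' s'.
Proof.
move=> le_V le_bellman s'N P_gt0.
have term_ge0 x :
    0 <= P M s a x * ((x \notin Sbot M)%:R * (Vmax Q' x - Vmax Q x)).
  by rewrite !mulr_ge0 ?subr_ge0.
have sum0 : \sum_x P M s a x * ((x \notin Sbot M)%:R * (Vmax Q' x - Vmax Q x)) = 0.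
  by apply/eqP; rewrite eq_le sumr_ge0 // andbT -bellmanB subr_le0.
have /eqP := psumr_eq0P (fun x _ => term_ge0 x) sum0 (i := s') isT.
by rewrite s'N mul1r mulf_eq0 (gt_eqF P_gt0) subr_eq0 => /eqP.
Qed.

Lemma occ_ge0 pi t s : is_policy pi -> 0 <= occ M pi t s.
Proof.
case=> pi_ge0 _; elim: t s => [|t IH] s /=; first exact: ler0n.
by apply: sumr_ge0 => x _; rewrite mulr_ge0 ?sumr_ge0 // => a _; rewrite mulr_ge0.
Qed.

Lemma alive_ge0 pi n s : is_policy pi -> 0 <= alive M pi n s.
Proof.
case=> pi_ge0 _; elim: n s => [|n IH] s /=.
  by apply: sumr_ge0 => a _; rewrite mulr_ge0.
by apply: sumr_ge0 => x _; rewrite mulr_ge0 ?sumr_ge0 // => a _; rewrite mulr_ge0.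
Qed.

Lemma step_gt0P pi s s' : is_policy pi ->
  reflect (exists2 a, 0 < pi s a & 0 < P M s a s')
          (0 < \sum_a pi s a * P M s a s').
Proof.
case=> pi_ge0 _; have term_ge0 a : true -> 0 <= pi s a * P M s a s'.
  by rewrite mulr_ge0.
apply: (iffP (psumr_gt0P term_ge0)) => [[a _]|[a pi_gt0 P_gt0]].
  by rewrite mulr_ge0_gt0 // => /andP[]; exists a.
by exists a; rewrite ?mulr_gt0.
Qed.
Arguments step_gt0P [pi s s'].

Lemma occ_succ_gt0P pi t s' : is_policy pi ->
  reflect (exists s a, [/\ 0 < occ M pi t s, 0 < pi s a & 0 < P M s a s'])
          (0 < occ M pi t.+1 s').
Proof.
move=> pol; have [pi_ge0 _] := pol.
have step_ge0 s : 0 <= \sum_a pi s a * P M s a s'.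
  by apply: sumr_ge0 => a _; rewrite mulr_ge0.
have term_ge0 s : true -> 0 <= occ M pi t s * \sum_a pi s a * P M s a s'.
  by rewrite mulr_ge0 ?occ_ge0.
apply: (iffP (psumr_gt0P term_ge0)) => [[s _]|[s [a [occ_gt0 pi_gt0 P_gt0]]]].
  rewrite mulr_ge0_gt0 ?occ_ge0 //.
  by case/andP=> occ_gt0 /(step_gt0P pol)[a]; exists s, a.
by exists s; rewrite // mulr_gt0 //; apply/(step_gt0P pol); exists a.
Qed.
Arguments occ_succ_gt0P [pi t s'].

Lemma alive_succ_gt0 pi n s a s' : is_policy pi -> s \notin Sbot M ->
  0 < alive M pi n s -> 0 < pi s a -> 0 < P M s a s' ->
  0 < alive M pi n.+1 s'.
Proof.
move=> pol sN alive_gt0 pi_gt0 P_gt0; have [pi_ge0 _] := pol.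
apply/psumr_gt0P => [x _|]; first by rewrite mulr_ge0 ?alive_ge0 ?sumr_ge0 //
  => b _; rewrite mulr_ge0.
by exists s; rewrite // mulr_gt0 //; apply/(step_gt0P pol); exists a.
Qed.

Lemma occ_reach_switch pi mu (C : {set S}) t x :
  is_policy pi -> is_policy mu -> (forall y b, y \notin C -> mu y b = pi y b) ->
  x \in C -> 0 < occ M pi t x -> exists t' c, c \in C /\ 0 < occ M mu t' c.
Proof.
move=> pol_pi pol_mu agree xC.
suff reach t' y : 0 < occ M pi t' y ->
    (exists t'' c, c \in C /\ 0 < occ M mu t'' c) \/ 0 < occ M mu t' y.
  by case/reach => // occ_x; exists t, x.
elim: t' y => [|t' IH] y; first by right.
case/(occ_succ_gt0P pol_pi) => z [b [occ_z pi_b P_b]].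
case: (IH z occ_z) => [|occ_mu_z]; first by left.
have [zC|zNC] := boolP (z \in C); first by left; exists t', z.
by right; apply/(occ_succ_gt0P pol_mu); exists z, b; rewrite agree.
Qed.

Hypothesis s0_term : s0 M \in Sbot M.
Hypothesis P_restart : forall s a s', s \in Sbot M -> P M s a s' = rho M s'.

(* From a terminal state the process restarts with law [rho], exactly as in
   its first step from [s0]. *)
Lemma alive_gt0_of_occ mu t x : is_policy mu -> x \notin Sbot M ->
  0 < occ M mu t x -> exists n, 0 < alive M mu n x.
Proof.
move=> pol; have [_ mu_sum1] := pol.
elim: t x => [|t IH] x xN /=.
  by case: eqP => [xs0|_]; [rewrite xs0 s0_term in xN | rewrite ltxx].
case/(occ_succ_gt0P pol) => y [b [occ_y mu_b P_b]].
have [yT|yN] := boolP (y \in Sbot M).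
  exists 0%N => /=; under eq_bigr do rewrite (P_restart _ _ s0_term).
  by rewrite -mulr_suml mu_sum1 mul1r -(P_restart b x yT).
have [n alive_y] := IH y yN occ_y.
by exists n.+1; exact: (alive_succ_gt0 pol yN alive_y mu_b P_b).
Qed.

Section ClosedClass.
Variables (mu : S -> A -> R) (C : {set S}).
Hypothesis mu_policy : is_policy mu.
Hypothesis C_nonterminal : forall x, x \in C -> x \notin Sbot M.
Hypothesis C_closed :
  forall x b y, x \in C -> 0 < mu x b -> 0 < P M x b y -> y \in C.

Lemma alive_closed_nondecreasing :
  nondecreasing_seq (fun n => \sum_(x in C) alive M mu n x).
Proof.
have [mu_ge0 mu_sum1] := mu_policy.
have stay x b : x \in C -> mu x b * \sum_(y in C) P M x b y = mu x b.
  move=> xC; have [mu0|mu_neq0] := eqVneq (mu x b) 0; first by rewrite mu0 mul0r.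
  have mu_gt0 : 0 < mu x b by rewrite lt_def mu_neq0 mu_ge0.
  rewrite -[RHS]mulr1 -(P_sum1 x b) [in RHS](bigID (mem C)) /=.
  rewrite [X in _ = _ * (_ + X)]big1 ?addr0 // => y yNC.
  apply/eqP; rewrite eq_le P_ge0 andbT leNgt; apply: contra yNC.
  exact: C_closed.
apply/nondecreasing_seqP => n /=.
have -> : \sum_(x in C) alive M mu n x = \sum_(y in C) \sum_(x in C)
    alive M mu n x * \sum_b mu x b * P M x b y.
  rewrite exchange_big /=; apply: eq_bigr => x xC.
  rewrite -mulr_sumr exchange_big /= -[LHS]mulr1; congr (_ * _).
  under eq_bigr do rewrite -mulr_sumr stay //.
  by rewrite mu_sum1.
apply: ler_sum => y _ /=; apply: ler_psum_sub => [x|x _]; first exact: C_nonterminal.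
by rewrite mulr_ge0 ?alive_ge0 ?sumr_ge0 // => b _; rewrite mulr_ge0.
Qed.

Lemma closed_alive_not_ET_finite x n : x \in C -> 0 < alive M mu n x ->
  ~ ET_finite M mu.
Proof.
move=> xC alive_x; rewrite /ET_finite.
apply: (series_ncvg_eventually_ge (e := \sum_(y in C) alive M mu n y) (N := n)).
  by apply/(psumr_gt0P (fun y _ => alive_ge0 n y mu_policy)); exists x.
move=> k le_nk; apply: le_trans (alive_closed_nondecreasing le_nk) _.
by apply: ler_psum_sub => // y _; exact: alive_ge0.
Qed.

End ClosedClass.
End Dynamics.

Section ELPTransitions.
Variables (R : realType) (S A : finType) (M : elp R S A).
Hypothesis M_ELP : is_ELP M.

Lemma is_ELP_P_ge0 s a s' : 0 <= P M s a s'.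
Proof. by case: M_ELP => /(_ s a)[/(_ s')]. Qed.

Lemma is_ELP_P_sum1 s a : \sum_s' P M s a s' = 1.
Proof. by case: M_ELP => /(_ s a)[]. Qed.

End ELPTransitions.

Section FeasibleBelowFixpoint.
Variables (R : realType) (S A : finType) (M : elp R S A).
Hypothesis M_ELP : is_ELP M.
Variables (Q Qs : S -> A -> R) (g : S -> A).
Hypothesis Q_feasible : feasible M Q.
Hypothesis Qs_fixed : forall s a, bellman M Qs s a = Qs s a.
Hypothesis g_greedy : forall s, Vmax Q s = Q s (g s).

Let P_ge0 := is_ELP_P_ge0 M_ELP.
Let P_sum1 := is_ELP_P_sum1 M_ELP.

Let gap s := Q s (g s) - Qs s (g s).

Lemma bellman_gap_le s a :
  Q s a - Qs s a <= \sum_s' P M s a s' * ((s' \notin Sbot M)%:R * gap s').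
Proof.
apply: le_trans (_ : bellman M Q s a - bellman M Qs s a <= _).
  by rewrite Qs_fixed lerD2r Q_feasible.
rewrite bellmanB; apply: ler_sum => s' _; rewrite ler_wpM2l ?ler_wpM2l //.
by rewrite /gap g_greedy lerD2l lerN2 Vmax_ge.
Qed.

Lemma argmax_gap_succ x y : (forall z, gap z <= gap x) -> 0 < gap x ->
  0 < P M x (g x) y -> y \notin Sbot M /\ gap y = gap x.
Proof.
move=> gap_max gap_gt0 P_gt0.
have f_le z : (z \notin Sbot M)%:R * gap z <= gap x.
  by case: (z \notin Sbot M); rewrite ?mul1r ?mul0r // ltW.
have /= := convex_ge_bound_eq (P_ge0 x (g x)) (P_sum1 x (g x)) f_le
  (bellman_gap_le x (g x)) P_gt0.
case: (y \notin Sbot M); first by rewrite mul1r.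
by rewrite mul0r => gap0; rewrite -gap0 ltxx in gap_gt0.
Qed.

Lemma gap_le0 x : gap x <= 0.
Proof.
have [_ _ [_ s0_term] ET_fin [P_restart reach]] := M_ELP.
rewrite leNgt; apply/negP => gap_gt0.
pose sm := [arg max_(z > x) gap z]%O.
have gap_max z : gap z <= gap sm by rewrite /sm; case: arg_maxP => // i _; apply.
pose C := [set w | (w \notin Sbot M) && (gap w == gap sm)].
have C_succ z y : gap z = gap sm -> 0 < P M z (g z) y -> y \in C.
  move=> z_max P_gt0; have z_top w : gap w <= gap z by rewrite z_max.
  have z_gt0 : 0 < gap z by rewrite z_max (lt_le_trans gap_gt0 (gap_max x)).
  have [yN gap_y] := argmax_gap_succ z_top z_gt0 P_gt0.
  by rewrite inE yN gap_y z_max eqxx.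
have [c _ P_c] : exists2 c, true & 0 < P M sm (g sm) c.
  by apply/(psumr_gt0P (fun c _ => P_ge0 sm (g sm) c)); rewrite P_sum1 ltr01.
have [pi0 [pol_pi0 [t0 occ_c]]] := reach c.
pose mu := switch_policy C g pi0.
have pol_mu : is_policy mu := switch_policyP C g pol_pi0.
have agree y b : y \notin C -> mu y b = pi0 y b.
  by rewrite /mu /switch_policy => /negbTE ->.
have [t [c' [c'C occ_c']]] :=
  occ_reach_switch P_ge0 pol_pi0 pol_mu agree (C_succ _ _ erefl P_c) occ_c.
have C_nonterminal z : z \in C -> z \notin Sbot M by rewrite inE => /andP[].
have [n alive_c'] :=
  alive_gt0_of_occ P_ge0 s0_term P_restart pol_mu (C_nonterminal _ c'C) occ_c'.
apply: (closed_alive_not_ET_finite P_ge0 P_sum1 pol_mu C_nonterminal _ c'C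
  alive_c' (ET_fin mu pol_mu)).
move=> z b y zC; rewrite /mu /switch_policy zC.
case: eqP => [->|_] P_gt0; last by rewrite ltxx in P_gt0.
by apply: C_succ; move: zC; rewrite inE => /andP[_ /eqP].
Qed.

End FeasibleBelowFixpoint.

Lemma feasible_le_fixpoint (R : realType) (S A : finType) (M : elp R S A)
    (Q Qs : S -> A -> R) :
  is_ELP M -> feasible M Q -> (forall s a, bellman M Qs s a = Qs s a) ->
  forall s a, Q s a <= Qs s a.
Proof.
move=> M_ELP Q_feasible Qs_fixed s a.
pose g x := [arg max_(b > a) Q x b]%O.
have g_greedy x : Vmax Q x = Q x (g x) by exact: Vmax_argmax.
rewrite -subr_le0.
apply: le_trans (bellman_gap_le M_ELP Q_feasible Qs_fixed g_greedy s a) _.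
apply: sumr_le0 => s' _; rewrite mulr_ge0_le0 ?mulr_ge0_le0 ?is_ELP_P_ge0 //.
exact: (gap_le0 M_ELP Q_feasible Qs_fixed g_greedy).
Qed.

Theorem mainTheorem11 (R : realType) (S A : finType) (M : elp R S A)
  (Qstar Qmax pi mu : S -> A -> R) (s : S) (a : A) :
  is_ELP M ->
  (forall s1 a1, bellman M Qstar s1 a1 = Qstar s1 a1) ->
  is_policy pi ->
  LP_optimal M pi Qmax ->
  greedy Qmax mu ->
  Qmax s a = Qstar s a ->
  forall s' a', Nset M mu s a s' a' ->
    Qmax s' a' = Qstar s' a' /\ Vmax Qmax s' = Vmax Qstar s'.
Proof.
move=> M_ELP Qstar_fixed _ [Qmax_feasible _] [[mu_ge0 _] mu_greedy] Qmax_eq s' a'.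
have P_ge0 := is_ELP_P_ge0 M_ELP.
case=> s'N; rewrite mulr_ge0_gt0 // => /andP[P_gt0 mu_gt0].
have Qmax_le := feasible_le_fixpoint M_ELP Qmax_feasible Qstar_fixed.
have bellman_le : bellman M Qstar s a <= bellman M Qmax s a.
  by rewrite Qstar_fixed -Qmax_eq; exact: Qmax_feasible.
have V_eq := Vmax_eq_of_bellman_ge P_ge0 (le_Vmax Qmax_le) bellman_le s'N P_gt0.
split=> //; apply/eqP; rewrite eq_le Qmax_le /=.
by rewrite (mu_greedy _ _ mu_gt0) V_eq Vmax_ge.
Qed.
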